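(* Let $(X,\circ,\bullet)$ be a right-hand skew Boolean algebra. Let $B=X/\gamma$, where $\gamma$ is Green's relation $\mathscr R$ of $(X,\circ)$, with the Boolean algebra structure induced by $\circ$, $\bullet$ and $0$, and let $p\colon X\to B$ be the quotient map. For $x\in X$ and $b\le p(x)$ in $B$ put $x|^{p(x)}_b=y\circ x$ for any $y$ with $p(y)=b$. Then $p\colon X\to B$ is a Boolean set, whose order is the natural partial order of $X$ ($x\le y$ iff $x=x\circ y$).
   Context: A right-hand skew Boolean algebra is $(X,\circ,\bullet)$ where $(X,\circ)$, $(X,\bullet)$ are bands such that: (SB1) $x\circ(x\bullet y)=x=(y\bullet x)\circ x$ and $x\bullet(x\circ y)=x=(y\circ x)\bullet x$; (SB2) $x\circ y\circ x=y\circ x$ and $x\bullet y\bullet x=x\bullet y$; (SB3) $x\bullet y=y\bullet x$ iff $x\circ y=y\circ x$; (SB4) there is $0$ with $0\circ x=0=x\circ 0$; (SB5) each $x^{\downarrow}=\{x\circ s\circ x:s\in X\}$ is a Boolean algebra with top element. Known facts: $(X,\circ)$ is a right normal band; the minimum semilattice congruence $\gamma$ (equal to $\mathscr R$ for $\circ$) is the same for $\circ$ and $\bullet$, and $X/\gamma$ is a Boolean algebra under the induced operations. Convention: a ''Boolean algebra'' means a generalized Boolean algebra (relatively complemented distributive lattice with $0$). Presheaf of sets over a meet semilattice $E$: pairwise disjoint sets $X_e$, restriction maps $x\mapsto x|^e_f$ for $e\ge f$ with $|^e_e=\mathrm{id}$ and $(x|^e_f)|^f_g=x|^e_g$; global support: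 all $X_e\ne\emptyset$. Order: $x\le y$ iff $p(x)\le p(y)$ and $x=y|^{p(y)}_{p(x)}$. Compatibility $x\sim y$: $x\wedge y$ exists and $p(x\wedge y)=p(x)\wedge p(y)$. A Boolean set is a presheaf with global support over a Boolean algebra with a least element $0$ in $(X,\le)$, joins of all compatible pairs, and $p(x)=0\Rightarrow x=0$. *)

(* A "Boolean algebra" = generalized Boolean algebra: a relatively complemented
   distributive lattice with 0.  Operations m (meet), j (join), z (bottom) on
   the elements of T satisfying S (S must be closed under m, j and contain z). *)

Definition le_of {T : Type} (m : T -> T -> T) (a b : T) : Prop := m a b = a.

Definition is_gba {T : Type} (S : T -> Prop) (m j : T -> T -> T) (z : T) : Prop :=
  S z /\
  (forall a b, S a -> S b -> S (m a b) /\ S (j a b)) /\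
  (forall a b c, S a -> S b -> S c -> m a (m b c) = m (m a b) c) /\
  (forall a b c, S a -> S b -> S c -> j a (j b c) = j (j a b) c) /\
  (forall a b, S a -> S b -> m a b = m b a) /\
  (forall a b, S a -> S b -> j a b = j b a) /\
  (forall a b, S a -> S b -> m a (j a b) = a) /\
  (forall a b, S a -> S b -> j a (m a b) = a) /\
  (forall a b c, S a -> S b -> S c -> m a (j b c) = j (m a b) (m a c)) /\
  (forall a, S a -> m z a = z) /\
  (forall a x b, S a -> S x -> S b -> le_of m a x -> le_of m x b ->
     exists y, S y /\ m x y = a /\ j x y = b).

Definition down {X : Type} (circ : X -> X -> X) (x u : X) : Prop :=
  exists s, u = circ (circ x s) x.

Record RightSkewBA (X : Type) (circ bullet : X -> X -> X) (zero : X) : Prop := {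
  circ_assoc : forall x y z, circ x (circ y z) = circ (circ x y) z;
  circ_idem : forall x, circ x x = x;
  bullet_assoc : forall x y z, bullet x (bullet y z) = bullet (bullet x y) z;
  bullet_idem : forall x, bullet x x = x;
  SB1_circ : forall x y, circ x (bullet x y) = x /\ circ (bullet y x) x = x;
  SB1_bullet : forall x y, bullet x (circ x y) = x /\ bullet (circ y x) x = x;
  SB2_circ : forall x y, circ (circ x y) x = circ y x;
  SB2_bullet : forall x y, bullet (bullet x y) x = bullet x y;
  SB3 : forall x y, bullet x y = bullet y x <-> circ x y = circ y x;
  SB4 : forall x, circ zero x = zero /\ circ x zero = zero;
  SB5 : forall x, is_gba (down circ x) circ bullet zero /\
          exists t, down circ x t /\ forall u, down circ x u -> le_of circ u t
}.

(* Green's relation R of the band (X, circ): x X^1 = y X^1 *)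
Definition greenR {X : Type} (circ : X -> X -> X) (x y : X) : Prop :=
  (x = y \/ exists s, x = circ y s) /\ (y = x \/ exists s, y = circ x s).

Definition nat_le {X : Type} (circ : X -> X -> X) (x y : X) : Prop :=
  x = circ x y.

(* Over a meet semilattice E with meet mE (order le_of mE); X_e = fibre of p
   over e (so the X_e are pairwise disjoint); restriction x |^{p x}_f = res x f,
   only meaningful for f <= p x. *)

Definition presheaf {X E : Type} (mE : E -> E -> E) (p : X -> E)
    (res : X -> E -> X) : Prop :=
  (forall x f, le_of mE f (p x) -> p (res x f) = f) /\
  (forall x, res x (p x) = x) /\
  (forall x f g, le_of mE f (p x) -> le_of mE g f -> res (res x f) g = res x g).

Definition global_support {X E : Type} (p : X -> E) : Prop :=
  forall e, exists x, p x = e.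

Definition psh_le {X E : Type} (mE : E -> E -> E) (p : X -> E)
    (res : X -> E -> X) (x y : X) : Prop :=
  le_of mE (p x) (p y) /\ x = res y (p x).

Definition is_glb {X : Type} (R : X -> X -> Prop) (x y m : X) : Prop :=
  R m x /\ R m y /\ forall w, R w x -> R w y -> R w m.

Definition is_lub {X : Type} (R : X -> X -> Prop) (x y u : X) : Prop :=
  R x u /\ R y u /\ forall w, R x w -> R y w -> R u w.

Definition compatible {X E : Type} (mE : E -> E -> E) (p : X -> E)
    (res : X -> E -> X) (x y : X) : Prop :=
  exists m, is_glb (psh_le mE p res) x y m /\ p m = mE (p x) (p y).

Definition BooleanSet {X E : Type} (mE jE : E -> E -> E) (zE : E)
    (p : X -> E) (res : X -> E -> X) : Prop :=
  is_gba (fun _ => True) mE jE zE /\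
  presheaf mE p res /\
  global_support p /\
  (exists z : X,
     (forall x, psh_le mE p res z x) /\
     (forall x, p x = zE -> x = z)) /\
  (forall x y, compatible mE p res x y ->
     exists u, is_lub (psh_le mE p res) x y u).

(* In a right normal band [y o x] only depends on the R-class of [y], so
   restriction is well defined.  Every finite family of elements lying
   below some [u] (in the sense [u o x = x]) has representatives [x o u] in
   the Boolean algebra [u^down] with the same images under p, so each Boolean
   algebra law of B is inherited from a suitable [u^down].  Finally, two
   elements with a meet in the presheaf order commute, and then [bullet x y]
   is their join in the natural partial order. *)

From Stdlib Require Import Setoid.

Section RightSkewBooleanAlgebra.

Variables (X : Type) (circ bullet : X -> X -> X) (zero : X).
Hypothesis HX : RightSkewBA X circ bullet zero.

Let assoc := circ_assoc _ _ _ _ HX.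
Let idem := circ_idem _ _ _ _ HX.

Lemma circ_absorb_l x y : circ x (circ y x) = circ y x.
Proof. rewrite assoc; apply (SB2_circ _ _ _ _ HX). Qed.

Lemma down_circ u t : down circ u (circ t u).
Proof. exists t; symmetry; apply (SB2_circ _ _ _ _ HX). Qed.

Lemma down_refl u : down circ u u.
Proof. pose proof (down_circ u u) as D; rewrite idem in D; exact D. Qed.

Lemma down_circ_r u y : down circ u y -> circ y u = y.
Proof.
  intros [t ->]; rewrite (SB2_circ _ _ _ _ HX), <- assoc, idem; reflexivity.
Qed.

Lemma down_gba u : is_gba (down circ u) circ bullet zero.
Proof. exact (proj1 (SB5 _ _ _ _ HX u)). Qed.

(* Commutativity of [a o x] and [b o x] in the Boolean algebra [x^down]. *)
Lemma circ_left_comm a b x : circ a (circ b x) = circ b (circ a x).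
Proof.
  destruct (down_gba x) as (_ & _ & _ & _ & Mcomm & _).
  pose proof (Mcomm _ _ (down_circ x a) (down_circ x b)) as E.
  rewrite <- !assoc, !circ_absorb_l in E; exact E.
Qed.

Lemma greenR_circ x y : greenR circ x y <-> circ x y = y /\ circ y x = x.
Proof.
  split.
  - intros [[Ex|[t Ex]] [Ey|[t' Ey]]]; split;
      first [ rewrite Ey, ?assoc, idem; reflexivity
            | rewrite Ex, ?assoc, idem; reflexivity ].
  - intros [E1 E2]; split; right; eauto.
Qed.

Lemma circ_below_trans x w v : circ w x = x -> circ v w = w -> circ v x = x.
Proof. intros E1 E2; rewrite <- E1, assoc, E2; reflexivity. Qed.

Lemma circ_bullet_below_l x y : circ (bullet x y) x = x.
Proof.
  rewrite <- (SB2_circ _ _ _ _ HX x (bullet x y)), (proj1 (SB1_circ _ _ _ _ HX x y)).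
  apply idem.
Qed.

Lemma circ_bullet_below_r x y : circ (bullet x y) y = y.
Proof. apply (SB1_circ _ _ _ _ HX). Qed.

Lemma nat_le_below x y : nat_le circ x y -> circ y x = x.
Proof.
  unfold nat_le; intros E.
  rewrite E at 1; rewrite circ_absorb_l; symmetry; exact E.
Qed.

Lemma nat_le_bullet_lub x y :
  circ x y = circ y x -> is_lub (nat_le circ) x y (bullet x y).
Proof.
  unfold nat_le; intros Hc; split; [|split].
  - symmetry; apply (SB1_circ _ _ _ _ HX).
  - rewrite (proj2 (SB3 _ _ _ _ HX x y) Hc); symmetry; apply (SB1_circ _ _ _ _ HX).
  - intros w Wx Wy.
    assert (Dx : down circ w x) by (exists x; rewrite (SB2_circ _ _ _ _ HX); exact Wx).
    assert (Dy : down circ w y) by (exists y; rewrite (SB2_circ _ _ _ _ HX); exact Wy).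
    destruct (down_gba w) as (_ & Closed & _).
    symmetry; apply down_circ_r, (Closed _ _ Dx Dy).
Qed.

End RightSkewBooleanAlgebra.

Section GreenQuotient.

Variables (X B : Type) (circ bullet : X -> X -> X) (zero : X).
Variables (mB jB : B -> B -> B) (zB : B) (p : X -> B) (s : B -> X).
Hypothesis HX : RightSkewBA X circ bullet zero.
Hypothesis Hp : forall x y, p x = p y <-> greenR circ x y.
Hypothesis HmB : forall x y, mB (p x) (p y) = p (circ x y).
Hypothesis HjB : forall x y, jB (p x) (p y) = p (bullet x y).
Hypothesis Hz : zB = p zero.
Hypothesis Hs : forall b, p (s b) = b.

Let assoc := circ_assoc _ _ _ _ HX.
Let idem := circ_idem _ _ _ _ HX.

Lemma p_eq_iff x y : p x = p y <-> circ x y = y /\ circ y x = x.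
Proof. rewrite Hp; apply (greenR_circ _ _ _ _ HX). Qed.

Lemma circ_p_eq_l x y y' : p y = p y' -> circ y x = circ y' x.
Proof.
  intros E; destruct (proj1 (p_eq_iff _ _) E) as [E1 E2].
  rewrite <- E2 at 1; rewrite <- assoc, (circ_left_comm _ _ _ _ HX), assoc, E1.
  reflexivity.
Qed.

Lemma leB_iff x w : le_of mB (p x) (p w) <-> circ w x = x.
Proof.
  unfold le_of; rewrite HmB, p_eq_iff, (SB2_circ _ _ _ _ HX), assoc, idem.
  tauto.
Qed.

Lemma p_circ_below u x : circ u x = x -> p (circ x u) = p x.
Proof. intros E; rewrite <- HmB; apply leB_iff, E. Qed.

Lemma p_circ_comm x y : p (circ x y) = p (circ y x).
Proof.
  assert (Swap : forall a b, circ (circ a b) (circ b a) = circ b a).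
  { intros a b; rewrite <- assoc, (assoc b b a), idem; apply (circ_absorb_l _ _ _ _ HX). }
  apply p_eq_iff; split; apply Swap.
Qed.

Lemma down_p_inj u y y' : down circ u y -> down circ u y' -> p y = p y' -> y = y'.
Proof.
  intros Dy Dy' E.
  rewrite <- (down_circ_r _ _ _ _ HX _ _ Dy), <- (down_circ_r _ _ _ _ HX _ _ Dy').
  apply circ_p_eq_l, E.
Qed.

Lemma mB_assoc a b c : mB a (mB b c) = mB (mB a b) c.
Proof. rewrite <- (Hs a), <- (Hs b), <- (Hs c), !HmB, assoc; reflexivity. Qed.

Lemma jB_assoc a b c : jB a (jB b c) = jB (jB a b) c.
Proof.
  rewrite <- (Hs a), <- (Hs b), <- (Hs c), !HjB, (bullet_assoc _ _ _ _ HX).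
  reflexivity.
Qed.

Lemma mB_comm a b : mB a b = mB b a.
Proof. rewrite <- (Hs a), <- (Hs b), !HmB; apply p_circ_comm. Qed.

Lemma jB_comm a b : jB a b = jB b a.
Proof.
  rewrite <- (Hs a), <- (Hs b); set (x := s a); set (y := s b).
  set (u := bullet x y).
  rewrite <- (p_circ_below u x), <- (p_circ_below u y), !HjB
    by apply (circ_bullet_below_l _ _ _ _ HX) || apply (circ_bullet_below_r _ _ _ _ HX).
  destruct (down_gba _ _ _ _ HX u) as (_ & _ & _ & _ & _ & Jcomm & _).
  f_equal; apply Jcomm; apply (down_circ _ _ _ _ HX).
Qed.

Lemma mB_jB_absorb a b : mB a (jB a b) = a.
Proof.
  rewrite <- (Hs a), <- (Hs b), HjB, HmB, (proj1 (SB1_circ _ _ _ _ HX _ _)).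
  reflexivity.
Qed.

Lemma jB_mB_absorb a b : jB a (mB a b) = a.
Proof.
  rewrite <- (Hs a), <- (Hs b), HmB, HjB, (proj1 (SB1_bullet _ _ _ _ HX _ _)).
  reflexivity.
Qed.

Lemma mB_jB_distr a b c : mB a (jB b c) = jB (mB a b) (mB a c).
Proof.
  rewrite <- (Hs a), <- (Hs b), <- (Hs c); set (x := s a); set (y := s b); set (z := s c).
  set (u := bullet x (bullet y z)).
  assert (Uyz : circ u (bullet y z) = bullet y z)
    by apply (circ_bullet_below_r _ _ _ _ HX).
  rewrite <- (p_circ_below u x), <- (p_circ_below u y), <- (p_circ_below u z).
  - rewrite !HjB, !HmB, !HjB; f_equal.
    destruct (down_gba _ _ _ _ HX u) as (_ & _ & _ & _ & _ & _ & _ & _ & Distr & _).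
    apply Distr; apply (down_circ _ _ _ _ HX).
  - apply (circ_below_trans _ _ _ _ HX _ (bullet y z)); [|exact Uyz].
    apply (circ_bullet_below_r _ _ _ _ HX).
  - apply (circ_below_trans _ _ _ _ HX _ (bullet y z)); [|exact Uyz].
    apply (circ_bullet_below_l _ _ _ _ HX).
  - apply (circ_bullet_below_l _ _ _ _ HX).
Qed.

Lemma mB_zB_l a : mB zB a = zB.
Proof. rewrite <- (Hs a), Hz, HmB, (proj1 (SB4 _ _ _ _ HX _)); reflexivity. Qed.

(* The complement of [a] in the interval [m, b] of B is computed in [u^down],
   where [u] represents [b]. *)
Lemma mB_rel_compl a m b :
  le_of mB a m -> le_of mB m b -> exists y, mB m y = a /\ jB m y = b.
Proof.
  rewrite <- (Hs a), <- (Hs m), <- (Hs b); set (xa := s a); set (xm := s m); set (u := s b).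
  intros Lam Lmb; pose proof Lam as Ham; apply leB_iff in Lam; apply leB_iff in Lmb.
  set (a' := circ xa u); set (m' := circ xm u).
  assert (Pa : p a' = p xa)
    by apply p_circ_below, (circ_below_trans _ _ _ _ HX _ _ _ Lam Lmb).
  assert (Pm : p m' = p xm) by apply p_circ_below, Lmb.
  assert (Lam' : le_of circ a' m').
  { apply (down_p_inj u).
    - unfold a', m'; rewrite assoc; apply (down_circ _ _ _ _ HX).
    - apply (down_circ _ _ _ _ HX).
    - rewrite <- HmB, Pa, Pm; exact Ham. }
  assert (Lmu : le_of circ m' u) by (unfold le_of, m'; rewrite <- assoc, idem; reflexivity).
  destruct (down_gba _ _ _ _ HX u) as (_ & _ & _ & _ & _ & _ & _ & _ & _ & _ & Compl).
  destruct (Compl a' m' u (down_circ _ _ _ _ HX _ _) (down_circ _ _ _ _ HX _ _)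
              (down_refl _ _ _ _ HX u) Lam' Lmu) as [y [_ [E1 E2]]].
  exists (p y); rewrite <- Pm, HmB, HjB, E1, E2; auto.
Qed.

Lemma quotient_is_gba : is_gba (fun _ => True) mB jB zB.
Proof.
  repeat split; intros; auto using mB_assoc, jB_assoc, mB_comm, jB_comm,
    mB_jB_absorb, jB_mB_absorb, mB_jB_distr, mB_zB_l.
  match goal with
  | Lam : le_of mB ?a ?m, Lmb : le_of mB ?m ?b |- _ =>
      destruct (mB_rel_compl _ _ _ Lam Lmb) as [y Hy]; exists y; auto
  end.
Qed.

Let restr (x : X) (b : B) : X := circ (s b) x.

Lemma restr_presheaf : presheaf mB p restr.
Proof.
  unfold restr; split; [|split].
  - intros x f L; rewrite <- HmB, Hs; exact L.
  - intros x; rewrite (circ_p_eq_l x _ x (Hs _)); apply idem.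
  - intros x f g _ Lgf; rewrite assoc; apply circ_p_eq_l.
    rewrite <- HmB, !Hs; exact Lgf.
Qed.

Lemma psh_le_nat_le x y : psh_le mB p restr x y <-> nat_le circ x y.
Proof.
  unfold psh_le, nat_le, restr; split.
  - intros [_ E]; rewrite E at 2; rewrite <- assoc, idem; exact E.
  - intros E; split.
    + apply leB_iff, (nat_le_below _ _ _ _ HX), E.
    + rewrite (circ_p_eq_l y _ x (Hs _)); exact E.
Qed.

Lemma zero_least : (forall x, psh_le mB p restr zero x) /\ (forall x, p x = zB -> x = zero).
Proof.
  split.
  - intros x; apply psh_le_nat_le; symmetry; apply (SB4 _ _ _ _ HX).
  - intros x E; rewrite Hz in E; apply p_eq_iff in E.
    destruct E as [_ E]; rewrite (proj1 (SB4 _ _ _ _ HX x)) in E; auto.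
Qed.

(* A lower bound [m] of [x] and [y] over [p (x o y)] equals both [y o x]
   and [x o y]. *)
Lemma compatible_circ_comm x y : compatible mB p restr x y -> circ x y = circ y x.
Proof.
  intros [m [[Mx [My _]] Pm]].
  apply psh_le_nat_le in Mx; apply psh_le_nat_le in My; unfold nat_le in Mx, My.
  rewrite HmB in Pm.
  transitivity m.
  - rewrite My, (circ_p_eq_l y _ _ Pm), <- assoc, idem; reflexivity.
  - rewrite Mx, (circ_p_eq_l x _ (circ y x)), <- assoc, idem; [reflexivity|].
    rewrite Pm; apply p_circ_comm.
Qed.

Lemma compatible_lub x y :
  compatible mB p restr x y -> exists u, is_lub (psh_le mB p restr) x y u.
Proof.
  intros C; exists (bullet x y).
  destruct (nat_le_bullet_lub _ _ _ _ HX _ _ (compatible_circ_comm _ _ C)) as (Ux & Uy & Least).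
  split; [|split]; try (apply psh_le_nat_le; assumption).
  intros w Wx Wy; apply psh_le_nat_le, Least; apply psh_le_nat_le; assumption.
Qed.

Lemma quotient_boolean_set : BooleanSet mB jB zB p restr.
Proof.
  split; [exact quotient_is_gba|].
  split; [exact restr_presheaf|].
  split; [intros e; exists (s e); apply Hs|].
  split; [exists zero; exact zero_least|].
  exact compatible_lub.
Qed.

End GreenQuotient.

Theorem proposition2p6 (X B : Type) (circ bullet : X -> X -> X) (zero : X)
    (mB jB : B -> B -> B) (zB : B) (p : X -> B) (s : B -> X) :
  RightSkewBA X circ bullet zero ->
  (* B = X / gamma with quotient map p, gamma = Green's R of (X, circ) *)
  (forall x y, p x = p y <-> greenR circ x y) ->
  (* induced operations on B *)
  (forall x y, mB (p x) (p y) = p (circ x y)) ->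
  (forall x y, jB (p x) (p y) = p (bullet x y)) ->
  zB = p zero ->
  (* s picks some y with p y = b, for every b (p is surjective) *)
  (forall b, p (s b) = b) ->
  (* x|^{p x}_b := y o x is independent of the choice of y with p y = b *)
  (forall x y y', le_of mB (p y) (p x) -> p y = p y' -> circ y x = circ y' x) /\
  (* p : X -> B with these restrictions is a Boolean set *)
  BooleanSet mB jB zB p (fun x b => circ (s b) x) /\
  (* its order is the natural partial order of X *)
  (forall x y, psh_le mB p (fun x b => circ (s b) x) x y <-> nat_le circ x y).
Proof.
  intros HX Hp HmB HjB Hz Hs.
  split; [|split].
  - intros x y y' _; apply (circ_p_eq_l X B circ bullet zero p HX Hp).
  - exact (quotient_boolean_set X B circ bullet zero mB jB zB p s HX Hp HmB HjB Hz Hs).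
  - exact (psh_le_nat_le X B circ bullet zero mB p s HX Hp HmB Hs).
Qed.
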